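(* Call a finite union-closed collection of sets containing at least one non-empty set a counterexample if every element of its universe belongs to fewer than half of the sets of the collection. Let $\mathcal{A}$ be a separating, union-closed counterexample such that no counterexample has fewer sets than $\mathcal{A}$. Then $|\mathcal{A}|\ge 4m-1$, where $m=|U(\mathcal{A})|$.
   Context: A collection $\mathcal{A}$ of sets is union-closed if $S,T\in\mathcal{A}$ implies $S\cup T\in\mathcal{A}$. The universe $U(\mathcal{A})$ is $\bigcup_{A\in\mathcal{A}}A$. $\mathcal{A}$ is separating if for any two distinct elements of $U(\mathcal{A})$ there is a set in $\mathcal{A}$ containing one of them but not the other. *)

From mathcomp Require Import all_boot.
Set Implicit Arguments. Unset Strict Implicit. Unset Printing Implicit Defensive.

Section UC.
Variable T : finType.

Definition union_closed (A : {set {set T}}) : Prop :=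
  forall S S' : {set T}, S \in A -> S' \in A -> S :|: S' \in A.

Definition universe (A : {set {set T}}) : {set T} := \bigcup_(S in A) S.

Definition separating (A : {set {set T}}) : Prop :=
  forall x y : T, x \in universe A -> y \in universe A -> x != y ->
    exists2 S, S \in A & (x \in S) != (y \in S).

Definition freq (A : {set {set T}}) (x : T) : nat := #|[set S in A | x \in S]|.

Definition counterexample (A : {set {set T}}) : Prop :=
  [/\ union_closed A,
      exists2 S, S \in A & S != set0
    & forall x, x \in universe A -> 2 * freq A x < #|A| ].
End UC.

(* Let x be an element of maximal frequency, and let B be the sets of A
   avoiding x.  B is union-closed, has more than half of the sets of A and
   fewer sets than A, so by minimality it is not a counterexample: some y of
   its universe lies in at least half of the sets of B; choose such a y of
   maximal frequency in A.  For a point z, let M z be the union of the sets of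
   A avoiding z.  By separation and the two maximality choices, M z contains x
   and y for every z other than x and y; moreover z |-> M z is injective and
   never hits U(A).  Hence at least m - 1 sets of A contain both x and y, so
   2(m - 1) + |B| <= 2 freq y <= |A| - 1, while 2|B| >= |A| + 1 because
   2 freq x < |A|; together these give |A| >= 4m - 1. *)
From mathcomp Require Import all_boot.
From mathcomp Require Import zify.
Set Implicit Arguments. Unset Strict Implicit. Unset Printing Implicit Defensive.

Section Avoiding.
Variable T : finType.
Implicit Types (A B : {set {set T}}) (S : {set T}) (x y z : T).

Definition avoiding A x : {set {set T}} := [set S in A | x \notin S].

Lemma avoiding_sub A x : avoiding A x \subset A.
Proof. by apply/subsetP => S; rewrite inE => /andP[]. Qed.

Lemma avoidingS A B z : B \subset A -> avoiding B z \subset avoiding A z.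
Proof. by move=> BA; apply/subsetP => S; rewrite !inE => /andP[/(subsetP BA)-> ->]. Qed.

Lemma universeS A B : B \subset A -> universe B \subset universe A.
Proof.
move=> BA; apply/subsetP => x /bigcupP[S SB xS].
by apply/bigcupP; exists S; rewrite ?(subsetP BA).
Qed.

Lemma union_closed_avoiding A x : union_closed A -> union_closed (avoiding A x).
Proof.
move=> ucA S S'; rewrite !inE => /andP[SA xS] /andP[S'A xS'].
by rewrite ucA // negb_or xS xS'.
Qed.

Lemma card_avoiding A x : #|avoiding A x| + freq A x = #|A|.
Proof.
rewrite addnC -(cardsID [set X : {set T} | x \in X] A) /freq.
by congr (_ + _); apply: eq_card => S; rewrite !inE // andbC.
Qed.

Lemma freq_split A x y :
  freq A y = #|[set S in A | (x \in S) && (y \in S)]| + freq (avoiding A x) y.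
Proof.
rewrite /freq -(cardsID [set X : {set T} | x \in X] [set S in A | y \in S]).
by congr (_ + _); apply: eq_card => S; rewrite !inE;
   case: (S \in A); case: (x \in S); case: (y \in S).
Qed.

Lemma freq_gt0 A x : x \in universe A -> 0 < freq A x.
Proof. by case/bigcupP=> S SA xS; apply/card_gt0P; exists S; rewrite inE SA. Qed.

Lemma universe_in A x : union_closed A -> x \in universe A -> universe A \in A.
Proof.
move=> ucA /bigcupP[S0 S0A _].
have -> : universe A = S0 :|: universe A by apply/esym/setUidPr/bigcup_sup.
apply: (big_ind (fun X => S0 :|: X \in A)) => [|X Y SX SY|S SA].
- by rewrite setU0.
- by rewrite -(setUid S0) setUACA ucA.
- exact: ucA.
Qed.

Lemma notin_universe_avoiding A z : z \notin universe (avoiding A z).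
Proof. by apply/bigcupP=> -[S]; rewrite inE => /andP[_ /negPf->]. Qed.

Lemma dominatedP A y z :
  reflect (forall S, S \in A -> y \in S -> z \in S) (y \notin universe (avoiding A z)).
Proof.
apply: (iffP idP) => [yM S SA yS | yz].
  by apply: contraR yM => zS; apply/bigcupP; exists S; rewrite // inE SA.
by apply/bigcupP=> -[S]; rewrite inE => /andP[SA /negP zS] yS; apply/zS/yz.
Qed.

Lemma freq_le_dominated A y z :
  y \notin universe (avoiding A z) -> freq A y <= freq A z.
Proof.
move/dominatedP=> yz; apply/subset_leq_card/subsetP => S.
by rewrite !inE => /andP[SA yS]; rewrite SA yz.
Qed.

Lemma mem_universe_dominated A y z :
  y \notin universe (avoiding A z) -> y \in universe A -> z \in universe A.
Proof.
by move/dominatedP=> yz /bigcupP[S SA yS]; apply/bigcupP; exists S; rewrite ?yz.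
Qed.

Section Separating.
Variable A : {set {set T}}.
Hypothesis sepA : separating A.

Lemma freq_lt_dominated y z : y \in universe A -> z \in universe A -> y != z ->
  y \notin universe (avoiding A z) -> freq A y < freq A z.
Proof.
move=> yU zU neq_yz /dominatedP yz; apply/proper_card/properP; split.
  by apply/subsetP => S; rewrite !inE => /andP[SA yS]; rewrite SA yz.
have [S SA] := sepA yU zU neq_yz.
case yS: (y \in S); first by rewrite yz.
by rewrite eq_sym eqbF_neg negbK => zS; exists S; rewrite !inE SA ?yS.
Qed.

Lemma universe_avoiding_inj :
  {in universe A &, injective (fun z => universe (avoiding A z))}.
Proof.
move=> z w zU wU Mzw; apply/eqP; apply: contraT => neq_zw.
have [S SA] := sepA zU wU neq_zw.
case zS: (z \in S); case wS: (w \in S) => // _.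
- have : z \in universe (avoiding A w) by apply/bigcupP; exists S; rewrite // inE SA wS.
  by rewrite -Mzw (negPf (notin_universe_avoiding A z)).
- have : w \in universe (avoiding A z) by apply/bigcupP; exists S; rewrite // inE SA zS.
  by rewrite Mzw (negPf (notin_universe_avoiding A w)).
Qed.

Lemma mem_universe_avoiding_of_max (P : pred T) y z :
  y \in universe A -> z \in universe A -> z != y -> P y ->
  (forall w, P w -> freq A w <= freq A y) ->
  (y \notin universe (avoiding A z) -> P z) ->
  y \in universe (avoiding A z).
Proof.
move=> yU zU; rewrite eq_sym => neq_yz Py ymax Pz; apply: contraT => ydom.
have := freq_lt_dominated yU zU neq_yz ydom.
by rewrite ltnNge ymax // Pz.
Qed.

Lemma card_universe_le_joint_freq x y : union_closed A ->
  x \in universe A -> y \in universe A -> x != y ->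
  (forall z, z \in universe A -> z != x -> z != y ->
     (x \in universe (avoiding A z)) && (y \in universe (avoiding A z))) ->
  #|universe A| <= #|[set S in A | (x \in S) && (y \in S)]| + 1.
Proof.
move=> ucA xU yU neq_xy sepxy.
set U := universe A; set C := [set S in A | _]; set V := U :\ x :\ y.
have cardV : #|U| = #|V| + 2.
  rewrite (cardsD1 x U) (cardsD1 y (U :\ x)) xU !inE eq_sym neq_xy yU -/V /=; lia.
have UC : U \in C by rewrite inE (universe_in ucA xU) xU yU.
have MV : (fun z => universe (avoiding A z)) @: V \subset C :\ U.
  apply/subsetP => _ /imsetP[z + ->]; rewrite !inE => /and3P[zy zx zU].
  have /andP[xM yM] := sepxy z zU zx zy.
  have MA := subsetP (avoiding_sub A z) _ (universe_in (union_closed_avoiding ucA) xM).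
  rewrite MA xM yM !andbT.
  by apply: contraNneq (notin_universe_avoiding A z); rewrite -/U => ->.
have := subset_leq_card MV; rewrite card_in_imset; last first.
  by apply: sub_in2 universe_avoiding_inj => z; rewrite !inE => /and3P[].
by rewrite (cardsD1 U C) UC cardV add1n addn1 addn2 !ltnS.
Qed.

End Separating.

Lemma exists_frequent_avoiding A x :
  counterexample A -> (forall B, counterexample B -> #|A| <= #|B|) ->
  x \in universe A ->
  exists y, (y \in universe (avoiding A x)) && (#|avoiding A x| <= 2 * freq (avoiding A x) y).
Proof.
move=> [ucA _ lt_half] minA xU.
have := card_avoiding A x; have := freq_gt0 xU; have := lt_half x xU.
set B := avoiding A x => lt_half_x freq_x_gt0 cardB.
apply/existsP; apply: contraT => /existsPn notB.
have /minA : counterexample B.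
  split; first exact: union_closed_avoiding.
    apply/exists_inP; apply: contraT => /exists_inPn B0.
    have : B \subset [set set0] by apply/subsetP => S /B0 /negPn; rewrite inE.
    by move/subset_leq_card; rewrite cards1; lia.
  by move=> y yU; move: (notB y); rewrite yU -ltnNge.
lia.
Qed.

End Avoiding.

Theorem theorem1 (T : finType) (A : {set {set T}}) :
  separating A -> counterexample A ->
  (forall (T' : finType) (B : {set {set T'}}), counterexample B -> #|A| <= #|B|) ->
  4 * #|universe A| <= #|A| + 1.
Proof.
move=> sepA cexA minA; have [ucA [S0 S0A /set0Pn[x0 x0S0]] lt_half] := cexA.
set U := universe A; have x0U : x0 \in U by apply/bigcupP; exists S0.
have [x xU xmax] := arg_maxnP (freq A) x0U.
set B := avoiding A x.
have [y0 y0B] := exists_frequent_avoiding cexA (@minA T) xU.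
pose frequentB w := (w \in universe B) && (#|B| <= 2 * freq B w).
have [y /andP[yB yfreq] ymax] := arg_maxnP (P := frequentB) (freq A) y0B.
have yU : y \in U := subsetP (universeS (avoiding_sub A x)) y yB.
have neq_xy : x != y by apply: contraTneq yB => <-; apply: notin_universe_avoiding.
have sep_xy z : z \in U -> z != x -> z != y ->
    (x \in universe (avoiding A z)) && (y \in universe (avoiding A z)).
  move=> zU zx zy; apply/andP; split.
    exact: (mem_universe_avoiding_of_max sepA xU zU zx xU xmax).
  apply: (mem_universe_avoiding_of_max sepA yU zU zy (P := frequentB)).
  - by rewrite /frequentB yB yfreq.
  - exact: ymax.
  move=> ydom; have ydomB : y \notin universe (avoiding B z).
    by apply: contra ydom; apply/subsetP/universeS/avoidingS/avoiding_sub.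
  rewrite /frequentB (mem_universe_dominated ydomB yB) (leq_trans yfreq) //.
  by rewrite leq_mul2l freq_le_dominated.
have := card_universe_le_joint_freq sepA ucA xU yU neq_xy sep_xy.
have := card_avoiding A x; have := freq_split A x y.
have := lt_half x xU; have := lt_half y yU; rewrite -/B -/U; lia.
Qed.
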